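(* Let $x_s<x_t$ be integers, let $C\ge 0$, and let $f:[x_s,x_t]\to\mathbb{R}$ be such that $([x_s,x_t],f)$ is an Ameso($C$) pair. Suppose there exist $x^0\in[x_s,x_t]$ and a positive integer $b$ with $[x^0-b,x^0]\subseteq[x_s,x_t]$ such that $f(x^0)=\min_{y\in[x^0-b,x_t]}f(y)$ and $f(x^0)+C\le \max_{y\in[x^0-b,x^0]}f(y)$. Then $f(x^0)=\min_{y\in[x_s,x_t]}f(y)$.
   Context: For integers $a\le b$, $[a,b]$ denotes the set of integers $\{a,a+1,\dots,b\}$. Floors and ceilings of vectors are taken componentwise. A set $D^n\subseteq\mathbb{Z}^n$ is an Ameso set if $\lceil(\vec x+\vec y)/2\rceil,\lfloor(\vec x+\vec y)/2\rfloor\in D^n$ for all $\vec x,\vec y\in D^n$. For $C\ge 0$, $(D^n,f)$ is an Ameso($C$) pair if $D^n$ is an Ameso set, $f:D^n\to\mathbb{R}$ is bounded below, and $f(\vec x)+f(\vec y)+C\ge f(\lceil(\vec x+\vec y)/2\rceil)+f(\lfloor(\vec x+\vec y)/2\rfloor)$ for all $\vec x,\vec y\in D^n$. *)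

From Stdlib Require Import Reals ZArith Lia Lra.
Open Scope R_scope.

Definition zfloor_half (z : Z) : Z := Z.div z 2.
Definition zceil_half (z : Z) : Z := Z.opp (Z.div (Z.opp z) 2).

Definition in_Zint (a b x : Z) : Prop := (a <= x <= b)%Z.

Definition ameso_set (D : Z -> Prop) : Prop :=
  forall x y, D x -> D y ->
    D (zceil_half (x + y)) /\ D (zfloor_half (x + y)).

(* Ameso(C) pair (D, f), f only meaningful on D *)
Definition ameso_pair (C : R) (D : Z -> Prop) (f : Z -> R) : Prop :=
  ameso_set D /\
  (exists m : R, forall x, D x -> m <= f x) /\
  (forall x y, D x -> D y ->
     f x + f y + C >= f (zceil_half (x + y)) + f (zfloor_half (x + y))).

(* Let z < x0 and suppose some point strictly
   between them lies at least C above f x0.  Take the leftmost maximiser m of f on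
   the open interval (z, x0).  If m is nearer to z than to x0, its mirror image
   2m - z lies in (m, x0], where f is at most f m, and the Ameso inequality at the
   pair (z, 2m - z) gives f z >= f m - C >= f x0.  Otherwise the mirror image
   2m - x0 of x0 lies in (z, m), and the Ameso inequality at (2m - x0, x0) gives
   f (2m - x0) >= f m, contradicting the choice of m.  Hence every point left of
   the window [x0 - b, x0] is at least f x0. *)

From Stdlib Require Import Reals ZArith Lia Lra.
Open Scope R_scope.

Lemma zhalf_double (w : Z) : zceil_half (2 * w) = w /\ zfloor_half (2 * w) = w.
Proof.
  unfold zceil_half, zfloor_half.
  replace (- (2 * w))%Z with (- w * 2)%Z by ring.
  replace (2 * w)%Z with (w * 2)%Z by ring.
  rewrite !Z.div_mul by lia. split; lia.
Qed.

Lemma leftmost_argmax (f : Z -> R) (a b : Z) : (a <= b)%Z ->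
  exists m, (a <= m <= b)%Z /\
    (forall y, (a <= y <= b)%Z -> f y <= f m) /\
    (forall y, (a <= y < m)%Z -> f y < f m).
Proof.
  intros Hab.
  replace b with (a + (b - a))%Z by ring.
  assert (Hk : (0 <= b - a)%Z) by lia.
  generalize dependent (b - a)%Z. clear Hab b.
  apply natlike_ind.
  - exists a. split; [lia|]. split; intros y Hy.
    + replace y with a by lia. lra.
    + lia.
  - intros k Hk [m [Hm [Hmax Hleft]]].
    set (top := (a + Z.succ k)%Z).
    destruct (Rle_lt_dec (f top) (f m)) as [Hle | Hlt].
    + exists m. split; [lia|]. split; [|exact Hleft].
      intros y Hy. destruct (Z.eq_dec y top) as [-> | Hne]; [exact Hle|].
      apply Hmax. unfold top in *. lia.
    + exists top. split; [unfold top; lia|].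
      split; intros y Hy.
      * destruct (Z.eq_dec y top) as [-> | Hne]; [lra|].
        assert (f y <= f m) by (apply Hmax; unfold top in *; lia). lra.
      * assert (f y <= f m) by (apply Hmax; unfold top in *; lia). lra.
Qed.

Section AmesoInterval.

Variables (xs xt : Z) (C : R) (f : Z -> R).
Hypothesis ameso_ineq : forall x y, in_Zint xs xt x -> in_Zint xs xt y ->
  f x + f y + C >= f (zceil_half (x + y)) + f (zfloor_half (x + y)).

Lemma ameso_midpoint (x y w : Z) :
  in_Zint xs xt x -> in_Zint xs xt y -> (x + y = 2 * w)%Z ->
  2 * f w <= f x + f y + C.
Proof.
  intros Hx Hy Hxy.
  pose proof (ameso_ineq x y Hx Hy) as H.
  destruct (zhalf_double w) as [Hceil Hfloor].
  rewrite Hxy, Hceil, Hfloor in H. lra.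
Qed.

Lemma ameso_const_ge0 (x : Z) : in_Zint xs xt x -> 0 <= C.
Proof.
  intros Hx.
  assert (2 * f x <= f x + f x + C) by (apply ameso_midpoint; [exact Hx | exact Hx | ring]).
  lra.
Qed.

Lemma ameso_le_left_of_bump (z w x0 : Z) :
  (xs <= z)%Z -> (z < w < x0)%Z -> (x0 <= xt)%Z ->
  f x0 + C <= f w -> f x0 <= f z.
Proof.
  intros Hz Hw Hx0 Hbump.
  destruct (leftmost_argmax f (z + 1) (x0 - 1)) as [m [Hm [Hmax Hleft]]]; [lia|].
  assert (Hfm : f x0 + C <= f m).
  { apply Rle_trans with (f w); [exact Hbump | apply Hmax; lia]. }
  assert (HC : 0 <= C) by (apply (ameso_const_ge0 x0); unfold in_Zint; lia).
  destruct (Z_le_gt_dec (m - z) (x0 - m)) as [Hnear | Hfar].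
  - assert (Hmirror : f (2 * m - z)%Z <= f m).
    { destruct (Z.eq_dec (2 * m - z) x0) as [-> | Hne]; [lra | apply Hmax; lia]. }
    assert (2 * f m <= f z + f (2 * m - z)%Z + C)
      by (apply ameso_midpoint; unfold in_Zint; lia).
    lra.
  - assert (2 * f m <= f (2 * m - x0)%Z + f x0 + C)
      by (apply ameso_midpoint; unfold in_Zint; lia).
    assert (f (2 * m - x0)%Z < f m) by (apply Hleft; lia).
    lra.
Qed.

End AmesoInterval.

Theorem theorem2 (xs xt : Z) (C : R) (f : Z -> R) (x0 b : Z) :
  (xs < xt)%Z ->
  0 <= C ->
  ameso_pair C (in_Zint xs xt) f ->
  in_Zint xs xt x0 ->
  (0 < b)%Z ->
  (forall y, in_Zint (x0 - b) x0 y -> in_Zint xs xt y) ->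
  (* f(x0) = min_{y in [x0-b, xt]} f(y) *)
  (forall y, in_Zint (x0 - b) xt y -> f x0 <= f y) ->
  (* f(x0) + C <= max_{y in [x0-b, x0]} f(y) *)
  (exists y, in_Zint (x0 - b) x0 y /\ f x0 + C <= f y) ->
  forall y, in_Zint xs xt y -> f x0 <= f y.
Proof.
  intros _ _ [_ [_ Hameso]] Hx0 Hb Hwindow Hmin [w [Hw Hfw]] y Hy.
  unfold in_Zint in *.
  destruct (Z_le_gt_dec (x0 - b) y) as [Hright | Hleft].
  - apply Hmin. unfold in_Zint. lia.
  - assert (Hbump : exists v, (x0 - b <= v < x0)%Z /\ f x0 + C <= f v).
    { destruct (Z.eq_dec w x0) as [-> | Hne].
      - exists (x0 - 1)%Z. split; [lia|].
        assert (f x0 <= f (x0 - 1)%Z) by (apply Hmin; unfold in_Zint; lia).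
        lra.
      - exists w. split; [lia | exact Hfw]. }
    destruct Hbump as [v [Hv Hfv]].
    apply (ameso_le_left_of_bump xs xt C f Hameso y v x0); lia || exact Hfv.
Qed.
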